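(* Let $(X,\Sigma)$ be a measurable space, $(\mathcal{E}_t)_{t\ge0}$ a process of pavings, $\boldsymbol{\mu}=(\mu_t)_{t\ge0}$ a family of monotone measures on $\Sigma$, and $\mathscr{A}=\{\mathsf{A}_t(\cdot|E)\colon E\in\mathcal{E}_t,\,t\ge0\}$ a parametric family of conditional aggregation operators. Let $c>0$ and $D\in\Sigma$ be such that, for every $t\in[0,c]$, $D\in\mathcal{E}_t^0$, $\sup_{E\in\mathcal{E}_t}\mu_t(E)=\mu_t(D)$ and $\mathsf{A}_t(\mathbf{1}_D|D)\ge t$. Then $\boldsymbol{\mu}_{\mathscr{A}}(\mathbf{1}_D,t)=\mu_t(D)$ for every $t\in[0,c]$.
   Context: $\Sigma^0=\Sigma\setminus\{\emptyset\}$. $\mathbf{F}$ denotes the set of all $\Sigma$-measurable, nonnegative, bounded functions $f\colon X\to[0,\infty)$. A monotone measure is a map $\mu\colon\Sigma\to[0,\infty]$ with $\mu(B)\le\mu(C)$ whenever $B\subseteq C$, $\mu(\emptyset)=0$ and $\mu(X)>0$. For $E\in\Sigma^0$, a conditional aggregation operator (CAO) w.r.t. $E$ is a map $\mathsf{A}(\cdot|E)\colon\mathbf{F}\to[0,\infty]$ such that (C1) $\mathsf{A}(f|E)\le\mathsf{A}(g|E)$ whenever $f(x)\le g(x)$ for all $x\in E$, and (C2) $\mathsf{A}(\mathbf{1}_{X\setminus E}|E)=0$. A process of pavings is a family $(\mathcal{E}_t)_{t\ge0}$ with $\emptyset\in\mathcal{E}_t\subseteq\Sigma$ for all $t$; $\mathcal{E}_t^0=\mathcal{E}_t\setminus\{\emptyset\}$.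 A parametric family of CAOs (pFCA) $\{\mathsf{A}_t(\cdot|E)\colon E\in\mathcal{E}_t,\,t\ge0\}$ consists of CAOs $\mathsf{A}_t(\cdot|E)$ w.r.t. $E$ for each $t$ and $E\in\mathcal{E}_t^0$, with the convention $\mathsf{A}_t(\cdot|\emptyset)=\infty$. The generalized level measure is $\boldsymbol{\mu}_{\mathscr{A}}(f,t)=\sup\{\mu_t(E)\colon \mathsf{A}_t(f|E)\ge t,\ E\in\mathcal{E}_t\}$ for $t\ge0$. *)

From HB Require Import structures.
From mathcomp Require Import all_boot all_order all_algebra.
From mathcomp Require Import all_classical all_reals all_analysis.
Set Implicit Arguments. Unset Strict Implicit. Unset Printing Implicit Defensive.
Import Order.TTheory GRing.Theory Num.Theory.
Local Open Scope classical_set_scope.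
Local Open Scope ring_scope.
Local Open Scope ereal_scope.

Section Defs.
Context (d : measure_display) (X : measurableType d) (R : realType).

Definition bnd_nonneg_mfun (f : X -> R) : Prop :=
  measurable_fun setT f /\ (forall x, (0 <= f x)%R) /\
  exists M : R, forall x, (f x <= M)%R.

Definition monotone_measure (mu : set X -> \bar R) : Prop :=
  (forall B, measurable B -> 0 <= mu B) /\
  (forall B C, measurable B -> measurable C -> B `<=` C -> mu B <= mu C) /\
  mu set0 = 0 /\ 0 < mu setT.

Definition is_CAO (E : set X) (A : (X -> R) -> \bar R) : Prop :=
  (forall f g, bnd_nonneg_mfun f -> bnd_nonneg_mfun g ->
     (forall x, E x -> (f x <= g x)%R) -> A f <= A g) /\
  A (\1_(~` E)) = 0 /\
  (forall f, bnd_nonneg_mfun f -> 0 <= A f).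

Definition paving_process (Ep : R -> set (set X)) : Prop :=
  forall t, (0 <= t)%R -> Ep t set0 /\ Ep t `<=` measurable.

(* parametric family of CAOs; A t E f stands for A_t(f|E) *)
Definition is_pFCA (Ep : R -> set (set X))
  (A : R -> set X -> (X -> R) -> \bar R) : Prop :=
  forall t, (0 <= t)%R ->
    (forall E, Ep t E -> E <> set0 -> is_CAO E (A t E)) /\
    (forall f, A t set0 f = +oo).

Definition gen_level_measure (Ep : R -> set (set X)) (mu : R -> set X -> \bar R)
  (A : R -> set X -> (X -> R) -> \bar R) (f : X -> R) (t : R) : \bar R :=
  ereal_sup [set mu t E | E in [set E | Ep t E /\ t%:E <= A t E f]].

End Defs.

From HB Require Import structures.
From mathcomp Require Import all_boot all_order all_algebra.
From mathcomp Require Import all_classical all_reals all_analysis.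
Import Order.TTheory GRing.Theory Num.Theory.
Local Open Scope classical_set_scope.
Local Open Scope ring_scope.
Local Open Scope ereal_scope.

Lemma ereal_sup_subset_attained (R : realType) (T : Type) (f : T -> \bar R)
    (S P : set T) (D : T) :
  P `<=` S -> P D -> ereal_sup (f @` S) = f D -> ereal_sup (f @` P) = f D.
Proof.
move=> PS PD supS; apply/le_anti/andP; split.
- by rewrite -supS; apply: ereal_sup_le; exact: image_subset.
- by apply: ereal_sup_ubound; exists D.
Qed.

Theorem proposition3p10 (d : measure_display) (X : measurableType d) (R : realType)
  (Ep : R -> set (set X)) (mu : R -> set X -> \bar R)
  (A : R -> set X -> (X -> R) -> \bar R) (c : R) (D : set X) :
  paving_process Ep ->
  (forall t, (0 <= t)%R -> monotone_measure (mu t)) ->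
  is_pFCA Ep A ->
  (0 < c)%R -> measurable D ->
  (forall t, (0 <= t <= c)%R ->
     [/\ Ep t D, D <> set0,
         ereal_sup [set mu t E | E in Ep t] = mu t D &
         t%:E <= A t D (\1_D)]) ->
  forall t, (0 <= t <= c)%R -> gen_level_measure Ep mu A (\1_D) t = mu t D.
Proof.
move=> _ _ _ _ _ hD t ht; have [EpD _ supD AD] := hD t ht.
rewrite /gen_level_measure.
apply: ereal_sup_subset_attained supD => [E []//|]; exact: (conj EpD AD).
Qed.
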